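(* Let $G$ be a smallest counterexample to the statement ''every $n$-vertex triangulation has an independent dominating set of size at most $n/3$'' (i.e., $G$ is a triangulation on $n$ vertices with no independent dominating set of size at most $n/3$, and every triangulation with fewer vertices has an independent dominating set of size at most one third of its number of vertices). Let $\psi$ be a partial proper $4$-coloring of $G$ such that every uncolored vertex has degree exactly four, $|\psi[v]|\ge 3$ for every vertex $v$, and $|\psi[v]|=4$ for every vertex $v$ of degree at most five. Then every bad edge of $G$ is part of two critical cycles.
   Context: Graphs are finite, undirected and simple. A triangulation is a planar graph embedded in the plane such that every face, including the outer face, is bounded by a cycle on three edges. A set $S\subseteq V(G)$ is an independent dominating set if no two vertices of $S$ are adjacent and every vertex not in $S$ has a neighbor in $S$. A partial proper $4$-coloring assigns to some vertices colors from $\{1,2,3,4\}$ with adjacent colored vertices receiving distinct colors. $\psi[v]$ is the set of colors used by $\psi$ on the closed neighborhood $N[v]$. For $i\in\{1,2,3,4\}$, $C_i$ is the set of vertices of color $i$, and $U_i$ is the set of vertices of $G$ not in $C_i$ and having no neighbor in $C_i$. A bad edge is an edge between $U_i$ and $U_j$ for some $i\neq j$. A critical cycle is the $4$-cycle formed by the neighbors of an uncolored vertex (the cycle around that vertex in the triangulation). *)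

From mathcomp Require Import all_boot.
Set Implicit Arguments.
Unset Strict Implicit.
Unset Printing Implicit Defensive.

Definition simple_graph (T : finType) (e : rel T) : Prop :=
  (forall x, ~~ e x x) /\ (forall x y, e x y = e y x).

(* Rotation system: for every vertex u, [rot u] restricted to the
   neighbourhood N(u) is a cyclic permutation of N(u) (the cyclic order
   of the neighbours of u around u in the plane embedding). *)
Definition rotation_system (T : finType) (e : rel T) (rot : T -> T -> T) : Prop :=
  forall u,
    (forall v, e u v -> e u (rot u v)) /\
    (forall v w, e u v -> e u w -> rot u v = rot u w -> v = w) /\
    (forall v w, e u v -> e u w -> exists k, iter k (rot u) v = w).

(* Face-tracing permutation on darts (u,v): next dart along the face. *)
Definition face_step (T : finType) (rot : T -> T -> T) (p : T * T) : T * T :=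
  (p.2, rot p.2 p.1).

Definition darts (T : finType) (e : rel T) : {set T * T} :=
  [set p | e p.1 p.2].

Definition nedges (T : finType) (e : rel T) : nat := #|darts e| %/ 2.

(* A (plane) triangulation, given combinatorially by a rotation system
   (= combinatorial map) of genus 0 all of whose faces are triangles:
   connected simple graph, every face has length 3, and Euler's formula
   V - E + F = 2 holds (F = #darts / 3). *)
Definition triangulation (T : finType) (e : rel T) (rot : T -> T -> T) : Prop :=
  [/\ simple_graph e,
      rotation_system e rot,
      (forall u v, connect e u v),
      (forall u v, e u v -> iter 3 (face_step rot) (u, v) = (u, v)) &
      #|T| + #|darts e| %/ 3 = nedges e + 2].

Definition independent (T : finType) (e : rel T) (S : {set T}) : Prop :=
  forall x y, x \in S -> y \in S -> ~~ e x y.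

Definition dominating (T : finType) (e : rel T) (S : {set T}) : Prop :=
  forall x, x \notin S -> exists2 y, y \in S & e x y.

Definition independent_dominating (T : finType) (e : rel T) (S : {set T}) : Prop :=
  independent e S /\ dominating e S.

Definition has_small_ids (T : finType) (e : rel T) : Prop :=
  exists S : {set T}, independent_dominating e S /\ 3 * #|S| <= #|T|.

Definition deg (T : finType) (e : rel T) (v : T) : nat := #|[set u | e v u]|.

(* Partial 4-colourings: None = uncoloured. *)
Definition proper_partial4 (T : finType) (e : rel T) (psi : T -> option 'I_4) : Prop :=
  forall x y c, e x y -> psi x = Some c -> psi y <> Some c.

Definition psi_closed (T : finType) (e : rel T) (psi : T -> option 'I_4) (v : T)
  : {set 'I_4} :=
  [set c | [exists u, ((u == v) || e v u) && (psi u == Some c)]].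

Definition color_class (T : finType) (psi : T -> option 'I_4) (i : 'I_4) : {set T} :=
  [set x | psi x == Some i].

Definition U_set (T : finType) (e : rel T) (psi : T -> option 'I_4) (i : 'I_4)
  : {set T} :=
  [set x | (x \notin color_class psi i) &&
           [forall y, e x y ==> (y \notin color_class psi i)]].

Definition bad_edge (T : finType) (e : rel T) (psi : T -> option 'I_4) (x y : T) : Prop :=
  e x y /\ exists i j : 'I_4, [/\ i != j, x \in U_set e psi i & y \in U_set e psi j].

(* The edge xy lies on the cycle around w in the triangulation (the cycle
   formed by the neighbours of w, consecutive in the rotation at w). *)
Definition on_cycle_around (T : finType) (e : rel T) (rot : T -> T -> T) (w x y : T)
  : Prop :=
  e w x /\ e w y /\ (rot w x = y \/ rot w y = x).

Definition on_critical_cycle (T : finType) (e : rel T) (rot : T -> T -> T)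
  (psi : T -> option 'I_4) (w x y : T) : Prop :=
  psi w = None /\ on_cycle_around e rot w x y.

From mathcomp Require Import all_boot.

Set Implicit Arguments.
Unset Strict Implicit.
Unset Printing Implicit Defensive.

(* Let xy be a bad edge with x in U_i and y in U_j. A vertex of some U_k misses
   the colour k on its closed neighbourhood, so it has |psi[v]| < 4; as
   uncoloured vertices have degree 4 and hence |psi[v]| = 4, both x and y are
   coloured, and their colours cx, cy together with i and j are four distinct
   colours. A common neighbour of x and y can take none of them, so it is
   uncoloured. The two faces of the triangulation on either side of xy supply
   two common neighbours a and b, and xy lies on the cycles around them; a = b
   would leave a with only the two neighbours x and y, not four. *)

Lemma mem_uniq_card (T : finType) (s : seq T) :
  uniq s -> size s = #|T| -> forall x, x \in s.
Proof.
move=> s_uniq s_size x.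
have card_s : #|s| = #|predT : {pred T}| by rewrite (card_uniqP s_uniq) s_size.
by rewrite (elimT (subset_cardP card_s) (subset_predT (mem s)) x).
Qed.

Section BadEdgeColouring.

Variables (T : finType) (e : rel T) (psi : T -> option 'I_4).
Hypothesis e_sym : symmetric e.
Hypothesis psi_proper : proper_partial4 e psi.
Hypothesis deg_uncoloured : forall v, psi v = None -> deg e v = 4.
Hypothesis psi_closed_full : forall v, deg e v <= 5 -> #|psi_closed e psi v| = 4.

Lemma proper_colours_neq x y c d :
  e x y -> psi x = Some c -> psi y = Some d -> c != d.
Proof.
move=> xy psi_x psi_y; apply/eqP => cd.
by apply: (psi_proper xy psi_x); rewrite psi_y cd.
Qed.

Lemma in_U_set i x : (x \in U_set e psi i) = (i \notin psi_closed e psi x).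
Proof.
rewrite !inE negb_exists; apply/andP/forallP => [[xNi /forallP Nxi] u | Nx].
  apply/negP => /andP [/orP [/eqP -> | xu] /eqP psi_u].
    by rewrite psi_u eqxx in xNi.
  by move: (Nxi u); rewrite xu inE psi_u eqxx.
split; first by move: (Nx x); rewrite eqxx.
by apply/forallP => u; apply/implyP => xu; move: (Nx u); rewrite xu orbT inE.
Qed.

Lemma U_set_self i x : x \in U_set e psi i -> psi x != Some i.
Proof. by rewrite inE => /andP [+ _]; rewrite inE. Qed.

Lemma U_set_nbr i x u : x \in U_set e psi i -> e x u -> psi u != Some i.
Proof. by rewrite inE => /andP [_ /forallP /(_ u) /implyP xuNi] /xuNi; rewrite inE. Qed.

Lemma U_set_coloured i x : x \in U_set e psi i -> exists c, psi x = Some c.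
Proof.
case psi_x: (psi x) => [c|]; first by exists c.
rewrite in_U_set => iNx; suff: psi_closed e psi x \proper setT.
  by move/proper_card; rewrite cardsT card_ord psi_closed_full // deg_uncoloured.
by rewrite properT; apply: contra iNx => /eqP ->; rewrite inE.
Qed.

Lemma bad_edge_common_nbr_uncoloured x y a :
  bad_edge e psi x y -> e x a -> e y a -> psi a = None.
Proof.
move=> [xy [i [j [ij xUi yUj]]]] xa ya.
have [cx psi_x] := U_set_coloured xUi.
have [cy psi_y] := U_set_coloured yUj.
have yx : e y x by rewrite e_sym.
have i_cx : i != cx by move: (U_set_self xUi); rewrite psi_x eq_sym.
have i_cy : i != cy by move: (U_set_nbr xUi xy); rewrite psi_y eq_sym.
have j_cx : j != cx by move: (U_set_nbr yUj yx); rewrite psi_x eq_sym.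
have j_cy : j != cy by move: (U_set_self yUj); rewrite psi_y eq_sym.
have cx_cy : cx != cy := proper_colours_neq xy psi_x psi_y.
have distinct_colours : uniq [:: i; j; cx; cy].
  by rewrite /= !inE !negb_or ij i_cx i_cy j_cx j_cy cx_cy.
case psi_a: (psi a) => [c|] //; exfalso.
have := mem_uniq_card distinct_colours (esym (card_ord 4)) c.
rewrite !inE => /or4P [] /eqP c_eq; move: psi_a; rewrite {}c_eq => psi_a.
- by move: (U_set_nbr xUi xa); rewrite psi_a eqxx.
- by move: (U_set_nbr yUj ya); rewrite psi_a eqxx.
- by move: (proper_colours_neq xa psi_x psi_a); rewrite eqxx.
- by move: (proper_colours_neq ya psi_y psi_a); rewrite eqxx.
Qed.

End BadEdgeColouring.

Section TriangularFaces.

Variables (T : finType) (e : rel T) (rot : T -> T -> T).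
Hypothesis e_sym : symmetric e.
Hypothesis rot_system : rotation_system e rot.
Hypothesis faces_triangular :
  forall u v, e u v -> iter 3 (face_step rot) (u, v) = (u, v).

Lemma rot_adj u v : e u v -> e u (rot u v).
Proof. by have [rot_nbr _] := rot_system u; apply: rot_nbr. Qed.

Lemma triangular_face u v :
  e u v -> [/\ e u (rot v u), e v (rot v u) & rot (rot v u) v = u].
Proof.
move=> uv; have vu : e v u by rewrite e_sym.
have rot_face : rot (rot v u) v = u by move: (faces_triangular uv) => [].
have va : e v (rot v u) := rot_adj vu.
by split=> //; rewrite e_sym -[X in e _ X]rot_face rot_adj // e_sym.
Qed.

Lemma deg_rot_swap a x y :
  e a x -> rot a x = y -> rot a y = x -> deg e a <= 2.
Proof.
move=> ax rot_x rot_y; have [_ [_ rot_orbit]] := rot_system a.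
have nbrs_a : [set u | e a u] \subset [set x; y].
  apply/subsetP => u; rewrite inE => au.
  have [k <-] := rot_orbit x u ax au.
  elim: k => [|k IHk]; first by rewrite !inE eqxx.
  by rewrite iterS; move: IHk; rewrite !inE => /orP [] /eqP ->;
    rewrite ?rot_x ?rot_y eqxx ?orbT.
by rewrite /deg (leq_trans (subset_leq_card nbrs_a)) // cards2; case: (x != y).
Qed.

End TriangularFaces.

Theorem mainTheorem5 (T : finType) (e : rel T) (rot : T -> T -> T)
  (psi : T -> option 'I_4) :
  (* G is a smallest counterexample *)
  triangulation e rot ->
  ~ has_small_ids e ->
  (forall (T' : finType) (e' : rel T') (rot' : T' -> T' -> T'),
      triangulation e' rot' -> #|T'| < #|T| -> has_small_ids e') ->
  (* hypotheses on psi *)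
  proper_partial4 e psi ->
  (forall v, psi v = None -> deg e v = 4) ->
  (forall v, 3 <= #|psi_closed e psi v|) ->
  (forall v, deg e v <= 5 -> #|psi_closed e psi v| = 4) ->
  (* conclusion *)
  forall x y, bad_edge e psi x y ->
    exists w1 w2, [/\ w1 != w2, on_critical_cycle e rot psi w1 x y
                              & on_critical_cycle e rot psi w2 x y].
Proof.
move=> [[_ e_sym] rot_system _ faces _] _ _ psi_proper deg_uncoloured _ psi_closed_full.
move=> x y bad_xy; have xy := bad_xy.1; have yx : e y x by rewrite e_sym.
have uncoloured := bad_edge_common_nbr_uncoloured e_sym psi_proper
  deg_uncoloured psi_closed_full bad_xy.
have [xa ya rot_a] := triangular_face e_sym rot_system faces xy.
have [yb xb rot_b] := triangular_face e_sym rot_system faces yx.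
set a := rot y x in xa ya rot_a *; set b := rot x y in yb xb rot_b *.
have a_uncoloured : psi a = None := uncoloured a xa ya.
have b_uncoloured : psi b = None := uncoloured b xb yb.
exists a, b; split.
- apply/eqP => ab; rewrite -ab in rot_b; have ax : e a x by rewrite e_sym.
  by have := deg_rot_swap rot_system ax rot_b rot_a; rewrite deg_uncoloured.
- by split=> //; rewrite /on_cycle_around !(e_sym a); split; [|split; [|right]].
- by split=> //; rewrite /on_cycle_around !(e_sym b); split; [|split; [|left]].
Qed.
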